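(* Assume $p<2q-1$. For every finite word $u$ over $B$ accepted by $\widehat{\mathcal{T}_{p/q}}$, there exists a finite word $v$ over $A_p$ accepted by $\mathcal{T}_{p/q}$ such that $\pi(u)=\pi(v)$ and $|u|=|v|$.
   Context: Let $p>q>1$ be coprime integers, $A_p=\{0,\dots,p-1\}$ and $B=\{p-(2q-1),\dots,p-1\}$. For $n\in\mathbb{N}$ and $a\in\mathbb{Z}$, let $\tau(n,a)=\frac{np+a}{q}$, defined only when $q$ divides $np+a$. Let $\mathcal{T}_{p/q}$ (resp. $\widehat{\mathcal{T}_{p/q}}$) be the deterministic automaton with state set $\mathbb{N}$, alphabet $A_p$ (resp. $B$), initial state $0$, and transitions $n\xrightarrow{a}\tau(n,a)$ for $a$ in the alphabet with $\tau(n,a)$ defined. A finite word is accepted if it labels a path starting at $0$. For a finite word $a_k a_{k-1}\cdots a_0$ of integer digits, $\pi(a_k\cdots a_0)=\sum_{i=0}^{k}\frac{a_i}{q}\left(\frac{p}{q}\right)^i$. $|u|$ denotes the length of $u$. *)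

From mathcomp Require Import all_boot all_order all_algebra.
Set Implicit Arguments. Unset Strict Implicit. Unset Printing Implicit Defensive.
Import Order.TTheory GRing.Theory Num.Theory.

(* Words a_k a_{k-1} ... a_0 are lists of integer digits, most significant
   digit first: [:: a_k; ...; a_0]. *)

Definition tau (p q : nat) (n : nat) (a : int) : option nat :=
  let m := (n%:Z * p%:Z + a)%R in
  if (0 <= m)%R && (q%:Z %| m)%Z then Some (absz m %/ q)%N else None.

Fixpoint run (p q : nat) (D : pred int) (n : nat) (w : seq int) : option nat :=
  match w with
  | [::] => Some n
  | a :: w' =>
      if D a then
        match tau p q n a with
        | Some m => run p q D m w'
        | None => None
        end
      else None
  end.

Definition accepted (p q : nat) (D : pred int) (w : seq int) : bool :=
  run p q D 0 w != None.

Definition alphA (p : nat) : pred int :=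
  fun a => ((0 <= a) && (a <= p%:Z - 1))%R.

Definition alphB (p q : nat) : pred int :=
  fun a => ((p%:Z - (2 * q%:Z - 1) <= a) && (a <= p%:Z - 1))%R.

Definition piw (p q : nat) (w : seq int) : rat :=
  (\sum_(i < size w)
     ((nth 0%R (rev w) i)%:~R / q%:R) * (p%:R / q%:R) ^+ i)%R.

(* A word read from state 0 ends in the state N = pi(w), so it suffices to
   reach the same state in T_{p/q} with the same number of letters.  In
   T_{p/q} every state N has exactly one incoming transition, from
   floor(N q / p) with letter N q mod p, so reading backwards from N gives a
   path of any length k ending in N and starting at the k-th iterate of
   N |-> floor(N q / p).  A transition n -a-> m with a <= p - 1 forces
   floor(m q / p) <= n, hence along an accepted word of length k over B this
   iterate is 0, which is the initial state. *)

From mathcomp Require Import all_boot all_order all_algebra zify.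
Import Order.TTheory GRing.Theory Num.Theory.
Set Implicit Arguments. Unset Strict Implicit. Unset Printing Implicit Defensive.
Local Open Scope ring_scope.

Section Automaton.

Variables p q : nat.
Hypotheses (p_gt0 : (0 < p)%N) (q_gt0 : (0 < q)%N).

Lemma tau_SomeE n a m :
  tau p q n a = Some m -> (m * q)%N%:Z = n%:Z * p%:Z + a.
Proof.
rewrite /tau; case: ifP => // /andP[m_ge0 q_dvd] [<-].
have q_dvd' : (q %| absz (n%:Z * p%:Z + a)%R)%N by exact: q_dvd.
by rewrite divnK // gez0_abs.
Qed.

Lemma tau_Some n a m :
  (m * q)%N%:Z = n%:Z * p%:Z + a -> tau p q n a = Some m.
Proof.
move=> eq_mq; rewrite /tau -eq_mq.
have -> : (q%:Z %| (m * q)%N%:Z)%Z by exact: dvdn_mull (dvdnn q).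
by rewrite /= mulnK.
Qed.

Lemma run_cat D n v w :
  run p q D n (v ++ w) = obind (fun m => run p q D m w) (run p q D n v).
Proof.
elim: v n => [|a v IHv] n //=.
by case: (D a) => //; case: (tau p q n a).
Qed.

Lemma run_all D n w m : run p q D n w = Some m -> all D w.
Proof.
elim: w n => [|a w IHw] n //=.
by case: (D a) => //; case: (tau p q n a) => // m' /IHw.
Qed.

Lemma run_piw D n w m : run p q D n w = Some m ->
  (m%:R : rat) = n%:R * (p%:R / q%:R) ^+ size w + piw p q w.
Proof.
have q_neq0 : (q%:R : rat) != 0 by rewrite pnatr_eq0 -lt0n.
have piw_cons a w' : piw p q (a :: w') =
    piw p q w' + a%:~R / q%:R * (p%:R / q%:R) ^+ size w'.
  rewrite /piw /= big_ord_recr /= rev_cons nth_rcons size_rev ltnn eqxx.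
  by congr (_ + _); apply: eq_bigr => i _; rewrite nth_rcons size_rev ltn_ord.
elim: w n => [|a w IHw] n /=.
  by move=> [->]; rewrite expr0 mulr1 /piw big_ord0 addr0.
case: (D a) => //; case tau_na: (tau p q n a) => [n'|] // /IHw ->.
rewrite piw_cons exprS addrCA addrC mulrA -mulrDl; congr (_ * _ + _).
apply: (mulIf q_neq0); rewrite mulrDl !mulrA !divfK // -!natrM.
rewrite -[LHS]/((n' * q)%N%:~R) (tau_SomeE tau_na) intrD intrM.
by rewrite natrM.
Qed.

(* The source of the unique transition of T_{p/q} into state N. *)
Definition pred_state (N : nat) : nat := (N * q %/ p)%N.

Lemma iter_pred_state_run (D : pred int) n w m :
  (forall a, D a -> a <= p%:Z - 1) -> run p q D n w = Some m ->
  (iter (size w) pred_state m <= n)%N.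
Proof.
move=> D_le; elim: w n => [|a w IHw] n /=; first by move=> [->].
case Da: (D a) => //; case tau_na: (tau p q n a) => [n'|] // /IHw le_n'.
apply: leq_trans (_ : pred_state n' <= n)%N.
  by rewrite leq_div2r // leq_mul2r le_n' orbT.
rewrite -ltnS ltn_divLR //.
have : (n' * q)%N%:Z < (n.+1 * p)%N%:Z; last by rewrite ltz_nat.
by rewrite (tau_SomeE tau_na); have := D_le a Da; lia.
Qed.

Lemma run_alphA_from_iter_pred_state (k N : nat) :
  exists2 v, run p q (alphA p) (iter k pred_state N) v = Some N & size v = k.
Proof.
elim: k N => [|k IHk] N; first by exists [::].
set a : int := (N * q %% p)%N%:Z.
have Aa : alphA p a by rewrite /alphA /a; have := ltn_pmod (N * q) p_gt0; lia.
have [v run_v size_v] := IHk (pred_state N).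
exists (rcons v a); last by rewrite size_rcons size_v.
rewrite iterSr -cats1 run_cat run_v /= Aa (tau_Some (m := N)) //.
by rewrite /a /pred_state; have := divn_eq (N * q) p; lia.
Qed.

End Automaton.

Theorem mainTheorem11 (p q : nat) :
  (1 < q)%N -> (q < p)%N -> coprime p q -> (p < 2 * q - 1)%N ->
  forall u : seq int,
    all (alphB p q) u -> accepted p q (alphB p q) u ->
    exists v : seq int,
      [/\ all (alphA p) v, accepted p q (alphA p) v,
          piw p q u = piw p q v & size u = size v].
Proof.
move=> q_gt1 q_lt_p _ _ u _; rewrite /accepted.
have q_gt0 : (0 < q)%N by apply: ltn_trans q_gt1.
have p_gt0 : (0 < p)%N by apply: ltn_trans q_lt_p.
case run_u: (run p q (alphB p q) 0 u) => [N|] // _.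
have B_le a : alphB p q a -> a <= p%:Z - 1 by case/andP.
have /eqP iter_0 : (iter (size u) (pred_state p q) N == 0)%N.
  by rewrite -leqn0 (iter_pred_state_run p_gt0 q_gt0 B_le run_u).
have [v run_v size_v] := run_alphA_from_iter_pred_state p_gt0 q_gt0 (size u) N.
rewrite iter_0 in run_v.
exists v; split; rewrite ?run_v ?size_v //; first exact: run_all run_v.
have := run_piw q_gt0 run_u; have := run_piw q_gt0 run_v.
by rewrite !mul0r !add0r => <- <-.
Qed.
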